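(* In the torn-paper channel with lost pieces described in the context, with any distribution on the input $X^n$, there is a finite constant $S$ such that for all integers $J>L\ge1$ and every $\delta>0$, $$\lim_{n\to\infty}\frac{H({\mathcal Y}_{\ge J})}{n}\le 2\big(S\sqrt{L/J}+\delta\big).$$
   Context: All logarithms are base 2 and $H(\cdot)$ denotes Shannon entropy. Channel model: the input is a binary string $X^n$. Let $N_1,N_2,\dots$ be i.i.d. positive-integer random variables (distribution may depend on $n$) with $E[N_1]=\ell_n$, where $\alpha:=\lim_{n\to\infty}(\log n)/\ell_n\in(0,\infty)$. $X^n$ is cut into $K$ consecutive fragments $\vec X_1,\dots,\vec X_K$ of lengths $N_1,\dots,N_K$ ($K$ random, last length truncated so that the lengths sum to $n$). Each fragment is independently deleted with probability $d(N_i)$ for a given $d:\mathbb{Z}_{>0}\to[0,1]$; ${\mathcal Y}$ is the multiset of non-deleted fragments. ${\mathcal Y}_{\ge J}$ is the sub-multiset of fragments in ${\mathcal Y}$ with $N_i\ge (J/L)\log n$. Standing regularity assumptions: $E[N_1/\log n]$ and $E[(N_1/\log n)^2]$ are bounded in $n$. *)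

From Stdlib Require Import Reals List Arith Bool.
From Coquelicot Require Import Coquelicot.
Import ListNotations.
Open Scope R_scope.

Definition log2 (x : R) : R := ln x / ln 2.

Fixpoint all_strings (n : nat) : list (list bool) :=
  match n with
  | O => [[]]
  | S n' => flat_map (fun s => [false :: s; true :: s]) (all_strings n')
  end.

(* compositions of m: lists of positive integers summing to m
   (fuel f >= m suffices since each part is >= 1) *)
Fixpoint comps_f (f m : nat) : list (list nat) :=
  match m with
  | O => [[]]
  | S _ => match f with
           | O => []
           | S f' => flat_map (fun k => map (cons k) (comps_f f' (m - k)))
                              (seq 1 m)
           end
  end.
Definition comps (m : nat) : list (list nat) := comps_f m m.

Definition tail_prob (q : nat -> R) (m : nat) : R :=
  1 - fold_right Rplus 0 (map q (seq 0 m)).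

(* probability that the cut process N_1, N_2, ... (i.i.d. with pmf q)
   produces the fragment lengths c = [c_1; ...; c_K] (last one truncated):
   N_i = c_i for i < K and N_K >= c_K *)
Fixpoint comp_prob (q : nat -> R) (c : list nat) : R :=
  match c with
  | [] => 1
  | [ck] => tail_prob q ck
  | ci :: c' => q ci * comp_prob q c'
  end.

(* probability of the keep/delete pattern m (true = kept) *)
Fixpoint mask_prob (d : nat -> R) (c : list nat) (m : list bool) : R :=
  match c, m with
  | ci :: c', b :: m' => (if b then 1 - d ci else d ci) * mask_prob d c' m'
  | _, _ => 1
  end.

Fixpoint cut (x : list bool) (c : list nat) : list (list bool) :=
  match c with
  | [] => []
  | k :: c' => firstn k x :: cut (skipn k x) c'
  end.

Fixpoint kept {A} (fr : list A) (m : list bool) : list A :=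
  match fr, m with
  | f :: fr', b :: m' => if b then f :: kept fr' m' else kept fr' m'
  | _, _ => []
  end.

(* outcome of the channel: input string, fragment lengths, keep pattern *)
Definition outcome : Type := (list bool * list nat * list bool)%type.

Definition outcomes (n : nat) : list outcome :=
  flat_map (fun x => flat_map (fun c => map (fun m => (x, c, m))
                                              (all_strings (length c)))
                              (comps n))
           (all_strings n).

Definition outcome_prob (px : list bool -> R) (q : nat -> R) (d : nat -> R)
  (w : outcome) : R :=
  let '(x, c, m) := w in px x * comp_prob q c * mask_prob d c m.

(* Y_{>=J}: (as a list, to be read as a multiset) the non-deleted fragments
   of length >= (J/L) log n *)
Definition Y_ge (n J L : nat) (w : outcome) : list (list bool) :=
  let '(x, c, m) := w in
  filter (fun f => if Rle_dec (INR J / INR L * log2 (INR n)) (INR (length f))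
                   then true else false)
         (kept (cut x c) m).

Definition lbl_eq_dec := list_eq_dec Bool.bool_dec.
Definition multiset_eqb (l1 l2 : list (list bool)) : bool :=
  forallb (fun y => Nat.eqb (count_occ lbl_eq_dec l1 y) (count_occ lbl_eq_dec l2 y))
          (l1 ++ l2).

(* Shannon entropy (base 2) of a random variable Y on a finite outcome list
   with probabilities P, where values are compared by the decidable
   equivalence eqv:  H(Y) = - sum_v P(Y=v) log P(Y=v)
                          = - sum_w P(w) log P(Y = Y w). *)
Definition entropy {V} (eqv : V -> V -> bool) (Om : list outcome)
  (P : outcome -> R) (Y : outcome -> V) : R :=
  let pY v := fold_right Rplus 0
                (map (fun w' => if eqv (Y w') v then P w' else 0) Om) in
  - fold_right Rplus 0 (map (fun w => P w * log2 (pY (Y w))) Om).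

Definition H_Yge (px : nat -> list bool -> R) (p : nat -> nat -> R)
  (d : nat -> R) (J L n : nat) : R :=
  entropy multiset_eqb (outcomes n) (outcome_prob (px n) (p n) d) (Y_ge n J L).

(* Describe the multiset Y_{>=J} fragment by fragment, a fragment s costing
   |s| + log2 (4 (n + 1)) bits (its length, then its bits).  These code lengths
   satisfy Kraft's inequality, so by Gibbs' inequality H(Y_{>=J}) is at most the
   expected code length plus a constant.  A surviving fragment has length at least
   t = (J/L) log2 n, hence costs at most (1/t + log2 (4 (n + 1))/t^2) |s|^2
   <= 3 (L/J) |s|^2 / log2 n.  Finally the renewal equation for the fragment
   lengths, together with Markov's bound on the tail of the mean, gives
   E[sum_i N_i^2] <= a n + a^2 with a = 2 E[N^2] / E[N] = O(log n).  Altogether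
   H(Y_{>=J}) <= 12 alpha B (L/J) n + O(log n), where B bounds E[(N / log2 n)^2],
   and L/J <= sqrt (L/J). *)

From Stdlib Require Import Reals List Arith Bool Lra Lia.
From Coquelicot Require Import Coquelicot.
Import ListNotations.
Open Scope R_scope.

Notation sumL f l := (fold_right Rplus 0 (map f l)).

Lemma sumL_app {A} (f : A -> R) l1 l2 : sumL f (l1 ++ l2) = sumL f l1 + sumL f l2.
Proof. induction l1 as [|x l1 IH]; simpl; [ring | rewrite IH; ring]. Qed.

Lemma sumL_map {A B} (f : B -> R) (h : A -> B) l :
  sumL f (map h l) = sumL (fun x => f (h x)) l.
Proof. now rewrite map_map. Qed.

Lemma sumL_ext {A} (f g : A -> R) l :
  (forall x, In x l -> f x = g x) -> sumL f l = sumL g l.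
Proof. intros H; f_equal; apply map_ext_in, H. Qed.

Lemma sumL_flat_map {A B} (f : B -> R) (g : A -> list B) l :
  sumL f (flat_map g l) = sumL (fun x => sumL f (g x)) l.
Proof.
  induction l as [|x l IH]; simpl; [reflexivity|].
  now rewrite sumL_app, IH.
Qed.

Lemma sumL_le {A} (f g : A -> R) l :
  (forall x, In x l -> f x <= g x) -> sumL f l <= sumL g l.
Proof.
  induction l as [|x l IH]; simpl; intros H; [lra|].
  specialize (IH (fun y Hy => H y (or_intror Hy))). specialize (H x (or_introl eq_refl)). lra.
Qed.

Lemma sumL_nonneg {A} (f : A -> R) l : (forall x, In x l -> 0 <= f x) -> 0 <= sumL f l.
Proof.
  induction l as [|x l IH]; simpl; intros H; [lra|].
  specialize (IH (fun y Hy => H y (or_intror Hy))). specialize (H x (or_introl eq_refl)). lra.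
Qed.

Lemma sumL_scal {A} (c : R) (f : A -> R) l : sumL (fun x => c * f x) l = c * sumL f l.
Proof. induction l as [|x l IH]; simpl; [ring | rewrite IH; ring]. Qed.

Lemma sumL_plus {A} (f g : A -> R) l : sumL (fun x => f x + g x) l = sumL f l + sumL g l.
Proof. induction l as [|x l IH]; simpl; [ring | rewrite IH; ring]. Qed.

Lemma sumL_opp {A} (f : A -> R) l : - sumL f l = sumL (fun x => - f x) l.
Proof. induction l as [|x l IH]; simpl; [ring | rewrite <- IH; ring]. Qed.

Lemma sumL_const {A} (c : R) (l : list A) : sumL (fun _ => c) l = INR (length l) * c.
Proof.
  induction l as [|x l IH]; cbn [map fold_right length]; [simpl; ring | rewrite IH, S_INR; ring].
Qed.

Lemma sumL_swap {A B} (h : A -> B -> R) (l1 : list A) (l2 : list B) :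
  sumL (fun x => sumL (h x) l2) l1 = sumL (fun y => sumL (fun x => h x y) l1) l2.
Proof.
  induction l1 as [|x l1 IH]; simpl.
  - induction l2 as [|y l2 IH2]; simpl; [reflexivity | rewrite <- IH2; ring].
  - now rewrite IH, <- sumL_plus.
Qed.

Lemma term_le_sumL {A} (f : A -> R) l x :
  (forall y, In y l -> 0 <= f y) -> In x l -> f x <= sumL f l.
Proof.
  induction l as [|y l IH]; simpl; intros H Hx; [contradiction|].
  assert (0 <= sumL f l) by (apply sumL_nonneg; auto).
  assert (0 <= f y) by auto.
  destruct Hx as [<- | Hx]; [lra|].
  specialize (IH (fun z Hz => H z (or_intror Hz)) Hx). lra.
Qed.

Lemma sumL_kept {A} (f : A -> R) fr m :
  (forall x, 0 <= f x) -> sumL f (kept fr m) <= sumL f fr.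
Proof.
  intros Hf. revert m; induction fr as [|x fr IH]; intros [|b m]; cbn [kept map fold_right].
  - lra.
  - lra.
  - pose proof (Hf x). pose proof (sumL_nonneg f fr (fun y _ => Hf y)). lra.
  - specialize (IH m). pose proof (Hf x). destruct b; cbn [map fold_right]; lra.
Qed.

Lemma sumL_filter {A} (f : A -> R) p l :
  (forall x, 0 <= f x) -> sumL f (filter p l) <= sumL f l.
Proof.
  intros Hf. induction l as [|x l IH]; simpl; [lra|].
  pose proof (Hf x). destruct (p x); cbn [map fold_right]; lra.
Qed.

Definition psum (f : nat -> R) (m : nat) : R := sumL f (seq 0 m).

Lemma psum_S f m : psum f (S m) = psum f m + f m.
Proof. unfold psum. rewrite seq_S, sumL_app. simpl. ring. Qed.

Lemma psum_succ_shift f m : psum f (S m) = f 0%nat + sumL f (seq 1 m).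
Proof. reflexivity. Qed.

Lemma psum_lim (f : nat -> R) (l : R) : is_series f l -> is_lim_seq (psum f) l.
Proof.
  intros H. apply is_lim_seq_incr_1, (is_lim_seq_ext (sum_n f)); [|exact H].
  intros m. symmetry. induction m as [|m IH].
  - unfold psum. simpl. rewrite sum_O. ring.
  - now rewrite psum_S, IH, sum_Sn.
Qed.

Lemma psum_le_series (f : nat -> R) (l : R) :
  is_series f l -> (forall k, 0 <= f k) -> forall m, psum f m <= l.
Proof.
  intros H Hf m. apply (is_lim_seq_incr_compare (psum f) l (psum_lim f l H)).
  intros k. rewrite psum_S. specialize (Hf k). lra.
Qed.

Lemma series_tail_le (f g : nat -> R) (lf lg : R) m : is_series f lf -> is_series g lg ->
  (forall k, (m <= k)%nat -> f k <= g k) -> lf - psum f m <= lg - psum g m.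
Proof.
  intros Hf Hg Hle.
  assert (Hmono : forall N, (m <= N)%nat -> psum g m - psum f m <= psum g N - psum f N).
  { intros N HN. induction HN as [|N HN IH]; [lra|]. rewrite !psum_S. specialize (Hle N HN). lra. }
  assert (Hlim : is_lim_seq (fun N => psum g N - psum f N) (lg - lf)).
  { apply (is_lim_seq_minus _ _ lg lf); try apply psum_lim; auto. reflexivity. }
  assert (Rbar_le (psum g m - psum f m) (lg - lf)).
  { apply (is_lim_seq_le_loc (fun _ => psum g m - psum f m) _ _ _ (ex_intro _ m Hmono)
      (is_lim_seq_const _) Hlim). }
  simpl in *. lra.
Qed.

Section Moments.
Variables (q : nat -> R) (ell M2 : R).
Hypothesis Hq_nonneg : forall k, 0 <= q k.
Hypothesis Hq_sum : is_series q 1.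
Hypothesis Hq_mean : is_series (fun k => INR k * q k) ell.
Hypothesis Hq_sq : is_series (fun k => INR k ^ 2 * q k) M2.

Lemma sq_moment_truncation_le m :
  psum (fun k => INR k ^ 2 * q k) m + (1 - psum q m) * INR m ^ 2 <= M2.
Proof.
  assert (Hpw : forall k, (m <= k)%nat -> INR m ^ 2 * q k <= INR k ^ 2 * q k).
  { intros k Hk. apply Rmult_le_compat_r; [apply Hq_nonneg|].
    apply pow_incr. split; [apply pos_INR | now apply le_INR]. }
  pose proof (series_tail_le _ _ _ M2 m (is_series_scal_l _ _ _ Hq_sum) Hq_sq Hpw) as T.
  change (scal (INR m ^ 2) 1) with (INR m ^ 2 * 1) in T.
  unfold psum in T |- *. rewrite sumL_scal in T. lra.
Qed.

(* Beyond [m], the weight [k] is at most [k^2 / m]. *)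
Lemma mean_tail_le m : (1 <= m)%nat -> ell - psum (fun k => INR k * q k) m <= M2 / INR m.
Proof.
  intros Hm. assert (Hm' : 1 <= INR m) by (apply (le_INR 1); auto).
  assert (Hpw : forall k, (m <= k)%nat -> INR k * q k <= / INR m * (INR k ^ 2 * q k)).
  { intros k Hk. apply le_INR in Hk. pose proof (Hq_nonneg k).
    replace (/ INR m * (INR k ^ 2 * q k)) with (INR k / INR m * (INR k * q k)) by (field; lra).
    apply Rle_trans with (1 * (INR k * q k)); [lra|].
    apply Rmult_le_compat_r; [pose proof (pos_INR k); nra | apply Rle_div_r; lra]. }
  pose proof (series_tail_le _ _ ell _ m Hq_mean (is_series_scal_l _ _ _ Hq_sq) Hpw) as T.
  change (scal (/ INR m) M2) with (/ INR m * M2) in T.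
  unfold psum in T |- *. rewrite sumL_scal in T.
  assert (0 <= sumL (fun k => INR k ^ 2 * q k) (seq 0 m)).
  { apply sumL_nonneg. intros k _. pose proof (Hq_nonneg k). pose proof (pow2_ge_0 (INR k)). nra. }
  assert (0 < / INR m) by (apply Rinv_0_lt_compat; lra).
  unfold Rdiv. nra.
Qed.

End Moments.

Definition sum_sq (c : list nat) : R := sumL (fun k => INR k ^ 2) c.
Definition comps_mass (q : nat -> R) (f m : nat) : R := sumL (comp_prob q) (comps_f f m).
Definition comps_sq_mean (q : nat -> R) (f m : nat) : R :=
  sumL (fun c => comp_prob q c * sum_sq c) (comps_f f m).

Lemma comps_f_0 f : comps_f f 0 = [[]].
Proof. now destruct f. Qed.

Lemma sumL_comps_f_S f m (F : list nat -> R) :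
  sumL F (comps_f (S f) (S m)) =
  sumL (fun k => sumL (fun c => F (k :: c)) (comps_f f (S m - k))) (seq 1 m) + F [S m].
Proof.
  change (comps_f (S f) (S m)) with
    (flat_map (fun k => map (cons k) (comps_f f (S m - k))) (seq 1 (S m))).
  rewrite sumL_flat_map, seq_S, sumL_app. f_equal.
  - apply sumL_ext. intros k _. apply sumL_map.
  - simpl. rewrite Nat.sub_diag, comps_f_0. simpl. ring.
Qed.

Lemma in_comps_f_S f m c : In c (comps_f (S f) (S m)) ->
  exists k c', c = k :: c' /\ (1 <= k <= S m)%nat /\ In c' (comps_f f (S m - k)).
Proof.
  change (comps_f (S f) (S m)) with
    (flat_map (fun k => map (cons k) (comps_f f (S m - k))) (seq 1 (S m))).
  intros H. apply in_flat_map in H as [k [Hk Hc]]. apply in_seq in Hk.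
  apply in_map_iff in Hc as [c' [<- Hc']]. exists k, c'. repeat split; auto; lia.
Qed.

Lemma comps_f_length f : forall m c, In c (comps_f f m) -> (length c <= m)%nat.
Proof.
  induction f as [|f IH]; intros [|m] c H.
  - destruct H as [<- | []]. simpl; lia.
  - contradiction.
  - rewrite comps_f_0 in H. destruct H as [<- | []]. simpl; lia.
  - apply in_comps_f_S in H as [k [c' [-> [Hk Hc]]]]. apply IH in Hc. simpl. lia.
Qed.

Lemma comp_prob_cons_comps q f m k c : (0 < m)%nat -> In c (comps_f f m) ->
  comp_prob q (k :: c) = q k * comp_prob q c.
Proof.
  intros Hm H. destruct m as [|m]; [lia|]. destruct f as [|f]; [contradiction|].
  apply in_comps_f_S in H as [k' [c' [-> _]]]. reflexivity.
Qed.

Section Compositions.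
Variable q : nat -> R.
Hypothesis Hq_0 : q 0%nat = 0.
Hypothesis Hq_nonneg : forall k, 0 <= q k.
Hypothesis Hq_sum : is_series q 1.

Lemma tail_prob_S m : tail_prob q (S m) = 1 - sumL q (seq 1 m).
Proof. unfold tail_prob. simpl. rewrite Hq_0. ring. Qed.

Lemma tail_prob_nonneg m : 0 <= tail_prob q m.
Proof.
  pose proof (psum_le_series q 1 Hq_sum Hq_nonneg m). unfold tail_prob, psum in *. lra.
Qed.

Lemma comp_prob_nonneg c : 0 <= comp_prob q c.
Proof.
  induction c as [|k [|k' c] IH]; simpl; [lra | apply tail_prob_nonneg |].
  now apply Rmult_le_pos.
Qed.

Lemma comps_sq_mean_nonneg f m : 0 <= comps_sq_mean q f m.
Proof.
  apply sumL_nonneg. intros c _. apply Rmult_le_pos; [apply comp_prob_nonneg|].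
  apply sumL_nonneg. intros; apply pow2_ge_0.
Qed.

Lemma comps_mass_1 f : forall m, (m <= f)%nat -> comps_mass q f m = 1.
Proof.
  induction f as [|f IH]; intros [|m] Hm; unfold comps_mass.
  - simpl; ring.
  - lia.
  - rewrite comps_f_0. simpl; ring.
  - rewrite sumL_comps_f_S, (sumL_ext _ q).
    + simpl comp_prob. rewrite tail_prob_S. ring.
    + intros k Hk. apply in_seq in Hk.
      rewrite (sumL_ext _ (fun c => q k * comp_prob q c)).
      * rewrite sumL_scal. fold (comps_mass q f (S m - k)). rewrite IH by lia. ring.
      * intros c Hc. apply (comp_prob_cons_comps q f (S m - k)); auto; lia.
Qed.

(* The renewal equation: condition on the length [k] of the first fragment. *)
Lemma comps_sq_mean_S f m : (m <= f)%nat ->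
  comps_sq_mean q (S f) (S m) =
  sumL (fun k => q k * (INR k ^ 2 + comps_sq_mean q f (S m - k))) (seq 1 m)
  + (1 - sumL q (seq 1 m)) * INR (S m) ^ 2.
Proof.
  intros Hm. unfold comps_sq_mean at 1. rewrite sumL_comps_f_S. f_equal.
  - apply sumL_ext. intros k Hk. apply in_seq in Hk.
    rewrite (sumL_ext _ (fun c => q k * (INR k ^ 2 * comp_prob q c + comp_prob q c * sum_sq c))).
    + rewrite sumL_scal, sumL_plus, sumL_scal. fold (comps_mass q f (S m - k)).
      rewrite comps_mass_1 by lia. unfold comps_sq_mean. ring.
    + intros c Hc. rewrite (comp_prob_cons_comps q f (S m - k)) by (auto; lia).
      unfold sum_sq; simpl. ring.
  - simpl comp_prob. rewrite tail_prob_S. unfold sum_sq; simpl. ring.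
Qed.

Lemma comps_sq_mean_le_sq f m : (m <= f)%nat -> comps_sq_mean q f m <= INR m ^ 2.
Proof.
  revert m. induction f as [|f IH]; intros [|m] Hm.
  - unfold comps_sq_mean, sum_sq; simpl. lra.
  - lia.
  - unfold comps_sq_mean. rewrite comps_f_0. unfold sum_sq; simpl. lra.
  - rewrite comps_sq_mean_S by lia.
    apply Rle_trans with
      (sumL (fun k => INR (S m) ^ 2 * q k) (seq 1 m) + (1 - sumL q (seq 1 m)) * INR (S m) ^ 2).
    2:{ rewrite sumL_scal. lra. }
    apply Rplus_le_compat_r, sumL_le. intros k Hk. apply in_seq in Hk.
    specialize (IH (S m - k)%nat ltac:(lia)). rewrite minus_INR in IH by lia.
    assert (1 <= INR k) by (apply (le_INR 1); lia).
    assert (INR k <= INR (S m)) by (apply le_INR; lia).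
    rewrite (Rmult_comm (INR (S m) ^ 2)). apply Rmult_le_compat_l; [apply Hq_nonneg | nra].
Qed.

End Compositions.

Section RenewalBound.
Variables (q : nat -> R) (ell M2 : R).
Hypothesis Hq_0 : q 0%nat = 0.
Hypothesis Hq_nonneg : forall k, 0 <= q k.
Hypothesis Hq_sum : is_series q 1.
Hypothesis Hq_mean : is_series (fun k => INR k * q k) ell.
Hypothesis Hq_sq : is_series (fun k => INR k ^ 2 * q k) M2.
Hypothesis Hell : 0 < ell.

Lemma sq_moment_nonneg : 0 <= M2.
Proof.
  pose proof (sq_moment_truncation_le q M2 Hq_nonneg Hq_sum Hq_sq 0).
  unfold psum in *; simpl in *. lra.
Qed.

Lemma half_mean_reached m : (1 <= m)%nat -> 2 * M2 / ell <= INR m ->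
  M2 <= 2 * M2 / ell * psum (fun k => INR k * q k) m.
Proof.
  intros Hm Ham. set (a := 2 * M2 / ell) in *.
  pose proof (mean_tail_le q ell M2 Hq_nonneg Hq_mean Hq_sq m Hm) as T.
  assert (0 < INR m) by (apply lt_0_INR; lia).
  pose proof sq_moment_nonneg.
  set (x := M2 / INR m) in T.
  assert (x * INR m = M2) by (unfold x; field; lra).
  assert (0 <= x) by (unfold x; apply Rdiv_le_0_compat; lra).
  assert (a * ell = 2 * M2) by (unfold a; field; lra).
  assert (0 <= a) by (unfold a; apply Rdiv_le_0_compat; lra).
  assert (a * x <= INR m * x) by (apply Rmult_le_compat_r; lra).
  assert (a * (ell - x) <= a * psum (fun k => INR k * q k) m) by (apply Rmult_le_compat_l; lra).
  lra.
Qed.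

(* Past length [2 M2 / ell] the first fragment already has half of its mean,
   so one step of the renewal equation costs at most [2 M2 / ell] per unit length. *)
Lemma comps_sq_mean_le_linear f m : (m <= f)%nat ->
  comps_sq_mean q f m <= 2 * M2 / ell * INR m + (2 * M2 / ell) ^ 2.
Proof.
  pose proof (half_mean_reached) as Hhalf.
  set (a := 2 * M2 / ell) in *.
  assert (Ha : 0 <= a) by (unfold a; pose proof sq_moment_nonneg; apply Rdiv_le_0_compat; lra).
  revert m. induction f as [|f IH]; intros m Hm.
  - assert (m = 0%nat) by lia; subst. unfold comps_sq_mean, sum_sq; simpl. nra.
  - destruct (Rlt_or_le (INR m) a) as [Hsmall | Hlarge].
    { pose proof (comps_sq_mean_le_sq q Hq_0 Hq_nonneg (S f) m Hm). pose proof (pos_INR m). nra. }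
    destruct m as [|m].
    { unfold comps_sq_mean. rewrite comps_f_0. unfold sum_sq; simpl. nra. }
    rewrite comps_sq_mean_S by (auto; lia).
    apply Rle_trans with
      (sumL (fun k => INR k ^ 2 * q k + (a * INR (S m) + a ^ 2) * q k + - a * (INR k * q k))
         (seq 1 m)
       + (1 - sumL q (seq 1 m)) * INR (S m) ^ 2).
    { apply Rplus_le_compat_r, sumL_le. intros k Hk. apply in_seq in Hk.
      specialize (IH (S m - k)%nat ltac:(lia)). rewrite minus_INR in IH by lia.
      pose proof (Hq_nonneg k). nra. }
    rewrite !sumL_plus, !sumL_scal.
    pose proof (sq_moment_truncation_le q M2 Hq_nonneg Hq_sum Hq_sq (S m)) as Htrunc.
    specialize (Hhalf (S m) ltac:(lia) Hlarge).
    rewrite !psum_succ_shift, Hq_0 in *.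
    pose proof (tail_prob_nonneg q Hq_nonneg Hq_sum (S m)). rewrite tail_prob_S in * by auto.
    pose proof (pos_INR (S m)).
    assert (0 <= (a * INR (S m) + a ^ 2) * (1 - sumL q (seq 1 m))) by (apply Rmult_le_pos; nra).
    lra.
Qed.

End RenewalBound.

Lemma all_strings_length n x : In x (all_strings n) -> length x = n.
Proof.
  revert x; induction n as [|n IH]; intros x H; simpl in H.
  - now destruct H as [<- | []].
  - apply in_flat_map in H as [s [Hs H]]. apply IH in Hs.
    destruct H as [<- | [<- | []]]; simpl; auto.
Qed.

Lemma in_all_strings s : In s (all_strings (length s)).
Proof.
  induction s as [|b s IH]; simpl; auto.
  apply in_flat_map. exists s. split; auto. destruct b; simpl; auto.
Qed.

Lemma sumL_all_strings_S n (F : list bool -> R) :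
  sumL F (all_strings (S n)) = sumL (fun s => F (false :: s) + F (true :: s)) (all_strings n).
Proof. simpl. rewrite sumL_flat_map. apply sumL_ext. intros s _. simpl. ring. Qed.

Lemma mask_prob_sum d c : sumL (mask_prob d c) (all_strings (length c)) = 1.
Proof.
  induction c as [|k c IH]; [simpl; ring|].
  cbn [length]. rewrite sumL_all_strings_S, <- IH. apply sumL_ext. intros s _. simpl. ring.
Qed.

Lemma mask_prob_nonneg d c m : (forall k, 0 <= d k <= 1) -> 0 <= mask_prob d c m.
Proof.
  intros Hd. revert m; induction c as [|k c IH]; intros [|b m]; simpl; try lra.
  apply Rmult_le_pos; auto. specialize (Hd k). destruct b; lra.
Qed.

Lemma sumL_outcomes n (F : outcome -> R) : sumL F (outcomes n) =
  sumL (fun x => sumL (fun c => sumL (fun m => F (x, c, m)) (all_strings (length c)))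
    (comps n)) (all_strings n).
Proof.
  unfold outcomes. rewrite sumL_flat_map. apply sumL_ext. intros x _.
  rewrite sumL_flat_map. apply sumL_ext. intros c _. apply sumL_map.
Qed.

Lemma in_outcomes n w : In w (outcomes n) -> exists x c m, w = (x, c, m) /\
  In x (all_strings n) /\ In c (comps n) /\ In m (all_strings (length c)).
Proof.
  unfold outcomes. intros H. apply in_flat_map in H as [x [Hx H]].
  apply in_flat_map in H as [c [Hc H]]. apply in_map_iff in H as [m [<- Hm]].
  exists x, c, m. auto.
Qed.

Lemma outcome_prob_nonneg px q d w : (forall x, 0 <= px x) -> (forall k, 0 <= d k <= 1) ->
  q 0%nat = 0 -> (forall k, 0 <= q k) -> is_series q 1 -> 0 <= outcome_prob px q d w.
Proof.
  intros Hpx Hd Hq0 Hq Hq1. destruct w as [[x c] m]. simpl.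
  apply Rmult_le_pos; [apply Rmult_le_pos|]; auto.
  - now apply comp_prob_nonneg.
  - now apply mask_prob_nonneg.
Qed.

Lemma expected_sum_sq n px q d :
  sumL (fun w => outcome_prob px q d w * sum_sq (snd (fst w))) (outcomes n) =
  comps_sq_mean q n n * sumL px (all_strings n).
Proof.
  rewrite sumL_outcomes, <- sumL_scal. apply sumL_ext. intros x _.
  rewrite Rmult_comm. unfold comps_sq_mean, comps. rewrite <- sumL_scal. apply sumL_ext. intros c _.
  rewrite (sumL_ext _ (fun m => px x * comp_prob q c * sum_sq c * mask_prob d c m)).
  - rewrite sumL_scal, mask_prob_sum. ring.
  - intros m _. simpl. ring.
Qed.

Lemma multiset_eqb_spec l1 l2 : multiset_eqb l1 l2 = true <->
  forall y, count_occ lbl_eq_dec l1 y = count_occ lbl_eq_dec l2 y.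
Proof.
  unfold multiset_eqb. rewrite forallb_forall. split.
  - intros H y. destruct (in_dec lbl_eq_dec y (l1 ++ l2)) as [Hi | Hn].
    + now apply Nat.eqb_eq, H.
    + rewrite in_app_iff in Hn.
      rewrite (proj1 (count_occ_not_In lbl_eq_dec l1 y)) by tauto.
      now rewrite (proj1 (count_occ_not_In lbl_eq_dec l2 y)) by tauto.
  - intros H y _. now apply Nat.eqb_eq.
Qed.

Lemma multiset_eqb_refl l : multiset_eqb l l = true.
Proof. now apply multiset_eqb_spec. Qed.

Lemma multiset_eqb_sym l1 l2 : multiset_eqb l1 l2 = multiset_eqb l2 l1.
Proof.
  apply eq_true_iff_eq. rewrite !multiset_eqb_spec.
  split; intros H y; symmetry; apply H.
Qed.

Lemma multiset_eqb_trans l1 l2 l3 :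
  multiset_eqb l1 l2 = true -> multiset_eqb l2 l3 = true -> multiset_eqb l1 l3 = true.
Proof. rewrite !multiset_eqb_spec. intros H1 H2 y. now rewrite H1. Qed.

Lemma ln_le_sub_1 x : 0 < x -> ln x <= x - 1.
Proof. intros Hx. pose proof (exp_ineq1_le (ln x)). rewrite exp_ln in *; lra. Qed.

Lemma ln2_pos : 0 < ln 2.
Proof. pose proof ln_lt_2. lra. Qed.

Lemma neg_ln_le p r Q : 0 < p -> 0 < r -> r <= Q -> - ln p <= - ln r + Q / p.
Proof.
  intros Hp Hr HrQ.
  pose proof (ln_le_sub_1 (Q / p) ltac:(apply Rdiv_lt_0_compat; lra)) as H.
  rewrite ln_div in H by lra. pose proof (ln_le r Q Hr HrQ). lra.
Qed.

Section Gibbs.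
Variables (V : Type) (eqv : V -> V -> bool).
Hypothesis eqv_refl : forall v, eqv v v = true.
Hypothesis eqv_sym : forall u v, eqv u v = eqv v u.
Hypothesis eqv_trans : forall u v w, eqv u v = true -> eqv v w = true -> eqv u w = true.
Variables (Om : list outcome) (P : outcome -> R) (Y : outcome -> V).
Hypothesis P_nonneg : forall w, In w Om -> 0 <= P w.

Definition class_mass (v : V) : R := sumL (fun w => if eqv (Y w) v then P w else 0) Om.

Lemma class_mass_nonneg v : 0 <= class_mass v.
Proof. apply sumL_nonneg. intros w Hw. destruct (eqv (Y w) v); auto; lra. Qed.

Lemma class_mass_ge w : In w Om -> P w <= class_mass (Y w).
Proof.
  intros Hw. unfold class_mass.
  pose proof (term_le_sumL (fun w' => if eqv (Y w') (Y w) then P w' else 0) Om w) as T.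
  cbv beta in T. rewrite eqv_refl in T. apply T; auto.
  intros w' Hw'. destruct (eqv (Y w') (Y w)); auto; lra.
Qed.

Lemma class_mass_eqv u v : eqv u v = true -> class_mass u = class_mass v.
Proof.
  intros Huv. apply sumL_ext. intros w _.
  destruct (eqv (Y w) u) eqn:E1, (eqv (Y w) v) eqn:E2; auto.
  - rewrite (eqv_trans _ _ _ E1 Huv) in E2. discriminate.
  - rewrite eqv_sym in Huv. rewrite (eqv_trans _ _ _ E2 Huv) in E1. discriminate.
Qed.

Variables (U : list V) (r : V -> R).
Hypothesis r_nonneg : forall u, 0 <= r u.

Definition class_weight (v : V) : R := sumL (fun u => if eqv v u then r u else 0) U.

Lemma class_weight_ge v : In v U -> r v <= class_weight v.
Proof.
  intros Hv. unfold class_weight.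
  pose proof (term_le_sumL (fun u => if eqv v u then r u else 0) U v) as T.
  cbv beta in T. rewrite eqv_refl in T. apply T; auto.
  intros u _. destruct (eqv v u); auto; lra.
Qed.

Lemma sum_class_weight_le :
  sumL (fun w => P w * class_weight (Y w) / class_mass (Y w)) Om <= sumL r U.
Proof.
  rewrite (sumL_ext _ (fun w => sumL (fun u =>
    if eqv (Y w) u then r u * (P w / class_mass u) else 0) U)).
  2:{ intros w _. transitivity (P w / class_mass (Y w) * class_weight (Y w)).
      { unfold Rdiv; ring. }
      unfold class_weight. rewrite <- sumL_scal. apply sumL_ext. intros u _.
      destruct (eqv (Y w) u) eqn:E; [|ring].
      rewrite (class_mass_eqv _ _ E). ring. }
  rewrite sumL_swap. apply sumL_le. intros u _.
  rewrite (sumL_ext _ (fun w => r u / class_mass u * (if eqv (Y w) u then P w else 0)))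
    by (intros w _; destruct (eqv (Y w) u); unfold Rdiv; ring).
  rewrite sumL_scal. fold (class_mass u).
  destruct (Rle_lt_or_eq_dec _ _ (class_mass_nonneg u)) as [Hpos | <-].
  - right. field. lra.
  - rewrite Rmult_0_r. apply r_nonneg.
Qed.

(* Gibbs' inequality, with arbitrary positive weights [r] in place of a probability. *)
Lemma entropy_le_code_length :
  (forall w, In w Om -> 0 < r (Y w)) -> (forall w, In w Om -> In (Y w) U) ->
  entropy eqv Om P Y <= sumL (fun w => P w * (- log2 (r (Y w)))) Om + sumL r U / ln 2.
Proof.
  intros Hr HU.
  change (entropy eqv Om P Y) with (- sumL (fun w => P w * log2 (class_mass (Y w))) Om).
  apply Rle_trans with (sumL (fun w => P w * (- log2 (r (Y w)))
    + / ln 2 * (P w * class_weight (Y w) / class_mass (Y w))) Om).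
  - rewrite sumL_opp. apply sumL_le. intros w Hw.
    destruct (Rle_lt_or_eq_dec _ _ (P_nonneg w Hw)) as [HPw | <-]; [|lra].
    pose proof (class_weight_ge (Y w) (HU w Hw)) as Hweight.
    assert (Hmass : 0 < class_mass (Y w)) by (pose proof (class_mass_ge w Hw); lra).
    pose proof (neg_ln_le _ _ _ Hmass (Hr w Hw) Hweight) as Hln.
    pose proof ln2_pos. unfold log2, Rdiv in *.
    assert (0 <= P w * / ln 2) by (apply Rmult_le_pos; [lra | apply Rlt_le, Rinv_0_lt_compat; lra]).
    apply Rmult_le_compat_l with (r := P w * / ln 2) in Hln; [|assumption].
    replace (- (P w * (ln (class_mass (Y w)) * / ln 2)))
      with (P w * / ln 2 * - ln (class_mass (Y w))) by ring.
    eapply Rle_trans; [exact Hln | right; field; lra].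
  - rewrite sumL_plus, sumL_scal. unfold Rdiv at 2. rewrite (Rmult_comm (sumL r U)).
    apply Rplus_le_compat_l, Rmult_le_compat_l; [apply Rlt_le, Rinv_0_lt_compat, ln2_pos|].
    apply sum_class_weight_le.
Qed.

End Gibbs.

(* A fragment [s] is described by its length, one of [n + 1] values, and then its
   bits; the extra factor [4] makes the weights of all tuples of fragments sum to
   at most [2]. *)
Definition frag_weight (n : nat) (s : list bool) : R := (/ 2) ^ length s / (4 * (INR n + 1)).
Definition code_weight (n : nat) (v : list (list bool)) : R :=
  fold_right Rmult 1 (map (frag_weight n) v).

Fixpoint tuples {A} (k : nat) (l : list A) : list (list A) :=
  match k with
  | O => [[]]
  | S k' => flat_map (fun s => map (cons s) (tuples k' l)) l
  end.

Definition short_strings (n : nat) : list (list bool) := flat_map all_strings (seq 0 (S n)).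
Definition short_tuples (n : nat) : list (list (list bool)) :=
  flat_map (fun k => tuples k (short_strings n)) (seq 0 (S n)).

Lemma sumL_half_pow_all_strings l : sumL (fun s => (/ 2) ^ length s) (all_strings l) = 1.
Proof.
  induction l as [|l IH]; [simpl; ring|].
  rewrite sumL_all_strings_S, <- IH. apply sumL_ext. intros s _. simpl. field.
Qed.

Lemma frag_weight_pos n s : 0 < frag_weight n s.
Proof. apply Rdiv_lt_0_compat; [apply pow_lt; lra | pose proof (pos_INR n); lra]. Qed.

Lemma code_weight_pos n v : 0 < code_weight n v.
Proof.
  induction v as [|s v IH]; cbn; [lra|].
  apply Rmult_lt_0_compat; [apply frag_weight_pos | exact IH].
Qed.

Lemma sum_frag_weight n : sumL (frag_weight n) (short_strings n) = / 4.
Proof.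
  unfold short_strings. rewrite sumL_flat_map.
  rewrite (sumL_ext _ (fun _ => / (4 * (INR n + 1)))).
  - rewrite sumL_const, length_seq, S_INR. field. pose proof (pos_INR n). lra.
  - intros l _. unfold frag_weight, Rdiv.
    rewrite (sumL_ext _ (fun s => / (4 * (INR n + 1)) * (/ 2) ^ length s)) by (intros; ring).
    rewrite sumL_scal, sumL_half_pow_all_strings. ring.
Qed.

Lemma sum_code_weight_tuples n k : sumL (code_weight n) (tuples k (short_strings n)) = (/ 4) ^ k.
Proof.
  induction k as [|k IH]; [unfold code_weight; simpl; ring|].
  cbn [tuples]. rewrite sumL_flat_map.
  rewrite (sumL_ext _ (fun s => (/ 4) ^ k * frag_weight n s)).
  - rewrite sumL_scal, sum_frag_weight. simpl. ring.
  - intros s _. rewrite sumL_map, <- IH, Rmult_comm, <- sumL_scal. reflexivity.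
Qed.

Lemma sum_quarter_pow_le N : sumL (fun k => (/ 4) ^ k) (seq 0 N) <= 2 - 2 * (/ 4) ^ N.
Proof.
  change (sumL (fun k => (/ 4) ^ k) (seq 0 N)) with (psum (fun k => (/ 4) ^ k) N).
  induction N as [|N IH]; [unfold psum; simpl; lra|].
  rewrite psum_S. pose proof (pow_le (/ 4) N ltac:(lra)). simpl pow. lra.
Qed.

Lemma sum_code_weight_le n : sumL (code_weight n) (short_tuples n) <= 2.
Proof.
  unfold short_tuples. rewrite sumL_flat_map.
  rewrite (sumL_ext _ (fun k => (/ 4) ^ k)) by (intros; apply sum_code_weight_tuples).
  pose proof (sum_quarter_pow_le (S n)). pose proof (pow_le (/ 4) (S n) ltac:(lra)). lra.
Qed.

Lemma neg_log2_code_weight n v :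
  - log2 (code_weight n v) = sumL (fun s => INR (length s) + log2 (4 * (INR n + 1))) v.
Proof.
  assert (Hn : 0 < 4 * (INR n + 1)) by (pose proof (pos_INR n); lra).
  pose proof ln2_pos. unfold log2.
  induction v as [|s v IH]; cbn [map fold_right].
  - unfold code_weight; simpl. rewrite ln_1. field. lra.
  - change (code_weight n (s :: v)) with (frag_weight n s * code_weight n v).
    rewrite (ln_mult _ _ (frag_weight_pos n s) (code_weight_pos n v)), <- IH.
    unfold frag_weight. rewrite (ln_div ((/ 2) ^ length s)) by (try apply pow_lt; lra).
    rewrite ln_pow, ln_Rinv by lra. field. lra.
Qed.

Lemma in_tuples {A} (l : list A) v : (forall s, In s v -> In s l) -> In v (tuples (length v) l).
Proof.
  induction v as [|s v IH]; simpl; intros H; auto.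
  apply in_flat_map. exists s. split; auto. apply in_map, IH. auto.
Qed.

Lemma in_short_tuples n v : (length v <= n)%nat ->
  (forall s, In s v -> (length s <= n)%nat) -> In v (short_tuples n).
Proof.
  intros Hv Hs. apply in_flat_map. exists (length v). split; [apply in_seq; lia|].
  apply in_tuples. intros s Hsv. apply in_flat_map. exists (length s). split.
  - apply in_seq. specialize (Hs s Hsv). lia.
  - apply in_all_strings.
Qed.

Lemma in_kept {A} (fr : list A) m s : In s (kept fr m) -> In s fr.
Proof.
  revert m; induction fr as [|f fr IH]; intros [|b m] H; simpl in *; try contradiction.
  destruct b; [destruct H as [<- | H]; auto|]; right; eapply IH; eauto.
Qed.

Lemma kept_length {A} (fr : list A) m : (length (kept fr m) <= length fr)%nat.
Proof.
  revert m; induction fr as [|f fr IH]; intros [|b m]; simpl; try lia.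
  specialize (IH m). destruct b; simpl; lia.
Qed.

Lemma cut_length x c : length (cut x c) = length c.
Proof. revert x; induction c; simpl; auto. Qed.

Lemma in_cut_length x c s : In s (cut x c) -> (length s <= length x)%nat.
Proof.
  revert x; induction c as [|k c IH]; simpl; intros x H; [contradiction|].
  destruct H as [<- | H].
  - rewrite length_firstn. lia.
  - apply IH in H. rewrite length_skipn in H. lia.
Qed.

Lemma sum_sq_cut_le x c : sumL (fun s => INR (length s) ^ 2) (cut x c) <= sum_sq c.
Proof.
  revert x; induction c as [|k c IH]; intros x; unfold sum_sq in *; cbn [cut map fold_right].
  { lra. }
  specialize (IH (skipn k x)).
  assert (INR (length (firstn k x)) <= INR k) by (apply le_INR; rewrite length_firstn; lia).
  pose proof (pos_INR (length (firstn k x))). nra.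
Qed.

Lemma in_Y_ge n J L x c m s : In s (Y_ge n J L (x, c, m)) ->
  In s (cut x c) /\ INR J / INR L * log2 (INR n) <= INR (length s).
Proof.
  unfold Y_ge. intros H. apply filter_In in H as [H1 H2]. split.
  - eapply in_kept; eauto.
  - destruct (Rle_dec _ _); auto; discriminate.
Qed.

Lemma Y_ge_in_short_tuples n J L x c m : In x (all_strings n) -> In c (comps n) ->
  In (Y_ge n J L (x, c, m)) (short_tuples n).
Proof.
  intros Hx Hc. apply in_short_tuples.
  - unfold Y_ge. eapply Nat.le_trans; [apply filter_length_le|].
    eapply Nat.le_trans; [apply kept_length|]. rewrite cut_length. eapply comps_f_length; eauto.
  - intros s Hs. apply in_Y_ge in Hs as [Hs _]. apply in_cut_length in Hs.
    apply all_strings_length in Hx. lia.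
Qed.

Lemma linear_le_quadratic t K y : 0 < t -> 0 <= K -> t <= y -> y + K <= (/ t + K / t ^ 2) * y ^ 2.
Proof.
  intros Ht HK Hy.
  assert (E : (/ t + K / t ^ 2) * y ^ 2 - (y + K)
              = y * (y - t) / t + K * ((y - t) * (y + t)) / t ^ 2) by (field; lra).
  assert (0 <= y * (y - t) / t) by (apply Rdiv_le_0_compat; nra).
  assert (0 <= K * ((y - t) * (y + t)) / t ^ 2)
    by (apply Rdiv_le_0_compat; [apply Rmult_le_pos|]; nra).
  lra.
Qed.

Lemma code_length_Y_ge_le n J L x c m K : 0 < INR J / INR L * log2 (INR n) -> 0 <= K ->
  sumL (fun s => INR (length s) + K) (Y_ge n J L (x, c, m)) <=
  (/ (INR J / INR L * log2 (INR n)) + K / (INR J / INR L * log2 (INR n)) ^ 2) * sum_sq c.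
Proof.
  set (t := INR J / INR L * log2 (INR n)). intros Ht HK.
  assert (Hk : 0 <= / t + K / t ^ 2).
  { apply Rplus_le_le_0_compat; [apply Rlt_le, Rinv_0_lt_compat; lra|].
    apply Rdiv_le_0_compat; [lra | apply pow_lt; lra]. }
  apply Rle_trans with
    (sumL (fun s => (/ t + K / t ^ 2) * INR (length s) ^ 2) (Y_ge n J L (x, c, m))).
  { apply sumL_le. intros s Hs. apply in_Y_ge in Hs as [_ Hs]. now apply linear_le_quadratic. }
  rewrite sumL_scal. apply Rmult_le_compat_l; [exact Hk|].
  unfold Y_ge. eapply Rle_trans; [apply sumL_filter; intros; apply pow2_ge_0|].
  eapply Rle_trans; [apply sumL_kept; intros; apply pow2_ge_0|]. apply sum_sq_cut_le.
Qed.

Lemma H_Yge_le (px : nat -> list bool -> R) (p : nat -> nat -> R) d J L n :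
  p n 0%nat = 0 -> (forall k, 0 <= p n k) -> is_series (p n) 1 ->
  (forall x, 0 <= px n x) -> sumL (px n) (all_strings n) = 1 ->
  (forall k, 0 <= d k <= 1) -> 0 < INR J / INR L * log2 (INR n) ->
  H_Yge px p d J L n <=
  (/ (INR J / INR L * log2 (INR n)) + log2 (4 * (INR n + 1)) / (INR J / INR L * log2 (INR n)) ^ 2)
    * comps_sq_mean (p n) n n + 2 / ln 2.
Proof.
  intros Hq0 Hq Hq1 Hpx Hpx1 Hd Ht.
  set (t := INR J / INR L * log2 (INR n)) in *.
  set (K := log2 (4 * (INR n + 1))).
  assert (HK : 0 <= K).
  { unfold K, log2. apply Rdiv_le_0_compat; [|apply ln2_pos].
    rewrite <- ln_1. apply ln_le; [lra | pose proof (pos_INR n); lra]. }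
  pose proof (fun w (_ : In w (outcomes n)) =>
    outcome_prob_nonneg (px n) (p n) d w Hpx Hd Hq0 Hq Hq1) as HP.
  eapply Rle_trans.
  { apply (entropy_le_code_length _ multiset_eqb multiset_eqb_refl multiset_eqb_sym
      multiset_eqb_trans _ _ (Y_ge n J L) HP (short_tuples n) (code_weight n)).
    - intros; apply Rlt_le, code_weight_pos.
    - intros; apply code_weight_pos.
    - intros w Hw. apply in_outcomes in Hw as [x [c [m [-> [Hx [Hc _]]]]]].
      now apply Y_ge_in_short_tuples. }
  apply Rplus_le_compat.
  2:{ unfold Rdiv. apply Rmult_le_compat_r, sum_code_weight_le.
      apply Rlt_le, Rinv_0_lt_compat, ln2_pos. }
  rewrite <- (Rmult_1_r (comps_sq_mean (p n) n n)), <- Hpx1 at 1.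
  rewrite <- expected_sum_sq with (d := d), <- sumL_scal.
  apply sumL_le. intros w Hw. specialize (HP w Hw).
  apply in_outcomes in Hw as [x [c [m [-> _]]]].
  rewrite neg_log2_code_weight. cbn [snd fst].
  apply Rle_trans with (outcome_prob (px n) (p n) d (x, c, m) * ((/ t + K / t ^ 2) * sum_sq c)).
  - apply Rmult_le_compat_l; [exact HP|]. now apply code_length_Y_ge_le.
  - right. ring.
Qed.

Lemma log2_le_4_sqrt x : 1 <= x -> log2 x <= 4 * sqrt x.
Proof.
  intros Hx. assert (Hs : 0 < sqrt x) by (apply sqrt_lt_R0; lra).
  assert (E : ln x = 2 * ln (sqrt x))
    by (rewrite <- (sqrt_sqrt x) at 1 by lra; rewrite ln_mult by auto; ring).
  pose proof (ln_le_sub_1 (sqrt x) Hs).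
  assert (0 <= ln x) by (rewrite <- ln_1; apply ln_le; lra).
  pose proof ln_lt_2. unfold log2. apply (Rmult_le_reg_r (ln 2)); [lra|].
  unfold Rdiv. rewrite Rmult_assoc, Rinv_l by lra. nra.
Qed.

Lemma log2_pos x : 1 < x -> 0 < log2 x.
Proof.
  intros Hx. apply Rdiv_lt_0_compat; [rewrite <- ln_1; apply ln_increasing | apply ln2_pos]; lra.
Qed.

Lemma log2_length_code_le x : 5 <= x -> log2 (4 * (x + 1)) <= 2 * log2 x.
Proof.
  intros Hx. unfold log2, Rdiv. pose proof (Rinv_0_lt_compat _ ln2_pos).
  assert (ln (4 * (x + 1)) <= 2 * ln x).
  { replace (2 * ln x) with (ln (x * x)) by (rewrite ln_mult by lra; ring). apply ln_le; nra. }
  nra.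
Qed.

Lemma code_rate_le lam K (J L : nat) : 0 < lam -> 0 <= K <= 2 * lam -> (1 <= L < J)%nat ->
  / (INR J / INR L * lam) + K / (INR J / INR L * lam) ^ 2 <= 3 * (INR L / INR J) / lam.
Proof.
  intros Hlam HK HLJ.
  assert (HL : 1 <= INR L) by (apply (le_INR 1); lia).
  assert (HJ : INR L < INR J) by (apply lt_INR; lia).
  assert (Hr1 : INR L / INR J <= 1) by (apply Rle_div_l; lra).
  assert (Hr0 : 0 < INR L / INR J) by (apply Rdiv_lt_0_compat; lra).
  replace (/ (INR J / INR L * lam) + K / (INR J / INR L * lam) ^ 2)
    with (INR L / INR J / lam * (1 + K / lam * (INR L / INR J))) by (field; lra).
  replace (3 * (INR L / INR J) / lam) with (INR L / INR J / lam * 3) by (field; lra).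
  apply Rmult_le_compat_l; [apply Rdiv_le_0_compat; lra|].
  assert (K / lam <= 2) by (apply Rle_div_l; lra).
  assert (0 <= K / lam) by (apply Rdiv_le_0_compat; lra).
  nra.
Qed.

Lemma is_series_sq_moment (q : nat -> R) lam : lam <> 0 ->
  ex_series (fun k => (INR k / lam) ^ 2 * q k) ->
  is_series (fun k => INR k ^ 2 * q k) (lam ^ 2 * Series (fun k => (INR k / lam) ^ 2 * q k)).
Proof.
  intros Hlam Hex. apply (is_series_ext (fun k => lam ^ 2 * ((INR k / lam) ^ 2 * q k))).
  - intros k. change (lam ^ 2 * ((INR k / lam) ^ 2 * q k) = INR k ^ 2 * q k). field. exact Hlam.
  - apply (is_series_scal_l (V := R_NormedModule)), Series_correct, Hex.
Qed.

Lemma comps_sq_mean_le_log_linear (q : nat -> R) (ell alpha B lam : R) (n : nat) :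
  q 0%nat = 0 -> (forall k, 0 <= q k) -> is_series q 1 ->
  is_series (fun k => INR k * q k) ell -> 0 < ell -> 0 < lam -> lam / ell <= 2 * alpha ->
  0 <= B -> ex_series (fun k => (INR k / lam) ^ 2 * q k) ->
  Series (fun k => (INR k / lam) ^ 2 * q k) <= B ->
  comps_sq_mean q n n <= 4 * alpha * B * lam * INR n + (4 * alpha * B * lam) ^ 2.
Proof.
  intros Hq0 Hq Hq1 Hmean Hell Hlam Hratio HB Hex HSer.
  set (M2 := lam ^ 2 * Series (fun k => (INR k / lam) ^ 2 * q k)).
  assert (HM2 : is_series (fun k => INR k ^ 2 * q k) M2)
    by (apply is_series_sq_moment; [lra | exact Hex]).
  assert (HM2B : M2 <= B * lam ^ 2)
    by (unfold M2; rewrite Rmult_comm; apply Rmult_le_compat_r; [apply pow2_ge_0 | exact HSer]).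
  pose proof (sq_moment_nonneg q M2 Hq Hq1 HM2).
  pose proof (comps_sq_mean_le_linear q ell M2 Hq0 Hq Hq1 Hmean HM2 Hell n n (le_n n)).
  assert (Ha : 0 <= 2 * M2 / ell <= 4 * alpha * B * lam).
  { split; [apply Rdiv_le_0_compat; lra|]. apply Rle_div_l; [lra|].
    assert (lam <= 2 * alpha * ell) by (apply (Rle_div_l lam (2 * alpha) ell); lra).
    assert (B * lam * lam <= B * lam * (2 * alpha * ell)) by (apply Rmult_le_compat_l; nra).
    nra. }
  pose proof (pos_INR n). nra.
Qed.

Lemma H_Yge_le_linear (p : nat -> nat -> R) (px : nat -> list bool -> R) (d : nat -> R)
  (ell alpha B : R) (J L n : nat) :
  p n 0%nat = 0 -> (forall k, 0 <= p n k) -> is_series (p n) 1 ->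
  is_series (fun k => INR k * p n k) ell -> 0 < ell ->
  log2 (INR n) / ell <= 2 * alpha -> 0 <= alpha -> 0 <= B ->
  ex_series (fun k => (INR k / log2 (INR n)) ^ 2 * p n k) ->
  Series (fun k => (INR k / log2 (INR n)) ^ 2 * p n k) <= B ->
  (forall x, 0 <= px n x) -> sumL (px n) (all_strings n) = 1 ->
  (forall k, 0 <= d k <= 1) -> (5 <= n)%nat -> (1 <= L < J)%nat ->
  H_Yge px p d J L n <=
  12 * alpha * B * (INR L / INR J) * INR n + 48 * alpha ^ 2 * B ^ 2 * log2 (INR n) + 4.
Proof.
  intros Hq0 Hq Hq1 Hmean Hell Hratio Halpha HB Hex HSer Hpx Hpx1 Hd Hn HLJ.
  assert (Hn5 : 5 <= INR n) by (apply (le_INR 5) in Hn; simpl in Hn; lra).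
  set (lam := log2 (INR n)) in *.
  assert (Hlam : 0 < lam) by (apply log2_pos; lra).
  set (r := INR L / INR J).
  assert (Hr : 0 < r <= 1).
  { assert (1 <= INR L) by (apply (le_INR 1); lia). assert (INR L < INR J) by (apply lt_INR; lia).
    split; [apply Rdiv_lt_0_compat | apply Rle_div_l]; lra. }
  pose proof (comps_sq_mean_le_log_linear (p n) ell alpha B lam n Hq0 Hq Hq1 Hmean Hell Hlam
    Hratio HB Hex HSer) as HG.
  set (A := 4 * alpha * B * lam) in HG.
  assert (Ht : 0 < INR J / INR L * lam).
  { apply Rmult_lt_0_compat; [apply Rdiv_lt_0_compat; apply lt_0_INR; lia | exact Hlam]. }
  assert (HK : 0 <= log2 (4 * (INR n + 1)) <= 2 * lam)
    by (split; [apply Rlt_le, log2_pos | apply log2_length_code_le]; lra).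
  pose proof (code_rate_le lam _ J L Hlam HK HLJ) as Hkap. fold r in Hkap.
  pose proof (H_Yge_le px p d J L n Hq0 Hq Hq1 Hpx Hpx1 Hd Ht) as HH. fold lam in HH.
  set (kap := / (INR J / INR L * lam) + log2 (4 * (INR n + 1)) / (INR J / INR L * lam) ^ 2) in *.
  assert (Hkap0 : 0 <= kap).
  { apply Rplus_le_le_0_compat; [apply Rlt_le, Rinv_0_lt_compat; lra|].
    apply Rdiv_le_0_compat; [lra | apply pow_lt; lra]. }
  assert (HG0 : 0 <= comps_sq_mean (p n) n n) by (apply comps_sq_mean_nonneg; auto).
  assert (Hcost : kap * comps_sq_mean (p n) n n <= 3 * r / lam * (A * INR n + A ^ 2))
    by (apply Rmult_le_compat; lra).
  replace (3 * r / lam * (A * INR n + A ^ 2))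
    with (12 * alpha * B * r * INR n + 48 * alpha ^ 2 * B ^ 2 * lam * r) in Hcost
    by (unfold A; field; lra).
  assert (48 * alpha ^ 2 * B ^ 2 * lam * r <= 48 * alpha ^ 2 * B ^ 2 * lam).
  { rewrite <- (Rmult_1_r (48 * alpha ^ 2 * B ^ 2 * lam)) at 2.
    apply Rmult_le_compat_l; [|lra]. pose proof (pow2_ge_0 alpha). pose proof (pow2_ge_0 B).
    apply Rmult_le_pos; [|lra]. nra. }
  assert (2 / ln 2 <= 4) by (apply Rle_div_l; [apply ln2_pos | pose proof ln_lt_2; lra]).
  lra.
Qed.

Lemma log2_term_negligible C delta : 0 <= C -> 0 < delta ->
  exists N, forall n, (N <= n)%nat -> C * log2 (INR n) + 4 <= delta * INR n.
Proof.
  intros HC Hdelta.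
  destruct (INR_archimed 1 (((4 * C + 4) / delta) ^ 2 + 1) ltac:(lra)) as [N HN].
  exists (S N). intros n Hn.
  assert (HnN : INR N + 1 <= INR n) by (rewrite <- S_INR; apply le_INR; exact Hn).
  assert (Hn1 : 1 <= INR n) by (pose proof (pos_INR N); lra).
  set (s := sqrt (INR n)).
  assert (Hss : s * s = INR n) by (apply sqrt_sqrt; lra).
  assert (Hs1 : 1 <= s) by (unfold s; rewrite <- sqrt_1; apply sqrt_le_1_alt; lra).
  assert (Hbig : (4 * C + 4) / delta <= s).
  { apply Rsqr_incr_0_var; [unfold Rsqr; simpl in HN; nra | lra]. }
  apply Rle_div_l in Hbig; [|lra].
  pose proof (log2_le_4_sqrt (INR n) Hn1) as Hlog. fold s in Hlog.
  assert (C * log2 (INR n) <= C * (4 * s)) by (apply Rmult_le_compat_l; lra).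
  nra.
Qed.

Lemma ell_eventually_comparable (ell : nat -> R) (alpha : R) :
  is_lim_seq (fun n => log2 (INR n) / ell n) alpha -> 0 < alpha ->
  exists N, forall n, (N <= n)%nat -> 0 < ell n /\ log2 (INR n) / ell n <= 2 * alpha.
Proof.
  intros Hlim Halpha. apply is_lim_seq_spec in Hlim.
  assert (Ha2 : 0 < alpha / 2) by lra.
  destruct (Hlim (mkposreal _ Ha2)) as [N HN]. simpl in HN.
  exists (N + 2)%nat. intros n Hn.
  specialize (HN n ltac:(lia)). apply Rabs_def2 in HN as [Hup Hlow].
  assert (Hlam : 0 < log2 (INR n)) by (apply log2_pos; apply (lt_INR 1); lia).
  split; [|lra].
  destruct (Rtotal_order (ell n) 0) as [Hneg | [Hzero | Hpos]]; auto.
  - assert (log2 (INR n) / ell n < 0) by (apply Rdiv_pos_neg; lra). lra.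
  - rewrite Hzero, Rdiv_0_r in Hlow. lra.
Qed.

Lemma LimSup_seq_le_of_eventually (u : nat -> R) c :
  eventually (fun n => u n <= c) -> Rbar_le (LimSup_seq u) c.
Proof.
  intros H. pose proof (LimSup_le u (fun _ => c) H) as Hle.
  now rewrite LimSup_seq_const in Hle.
Qed.

Lemma le_sqrt_of_le_1 r : 0 <= r <= 1 -> r <= sqrt r.
Proof.
  intros Hr. pose proof (sqrt_sqrt r (proj1 Hr)). pose proof (sqrt_pos r).
  assert (sqrt r <= 1) by (rewrite <- sqrt_1; apply sqrt_le_1_alt; lra). nra.
Qed.

Theorem lemma4
  (* p n : pmf of the fragment length N_1 at block length n *)
  (p : nat -> nat -> R) (ell : nat -> R) (alpha : R)
  (d : nat -> R)
  (* px n : distribution of the input X^n on binary strings of length n *)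
  (px : nat -> list bool -> R)
  (Hp_nonneg : forall n k, 0 <= p n k)
  (Hp_pos : forall n, p n 0%nat = 0)
  (Hp_sum : forall n, is_series (p n) 1)
  (Hmean : forall n, is_series (fun k => INR k * p n k) (ell n))
  (Halpha : is_lim_seq (fun n => log2 (INR n) / ell n) alpha)
  (Halpha_pos : 0 < alpha)
  (Hreg1 : exists B, forall n, (2 <= n)%nat -> ell n / log2 (INR n) <= B)
  (Hreg2 : exists B, forall n, (2 <= n)%nat ->
      ex_series (fun k => (INR k / log2 (INR n)) ^ 2 * p n k) /\
      Series (fun k => (INR k / log2 (INR n)) ^ 2 * p n k) <= B)
  (Hd : forall k, 0 <= d k <= 1)
  (Hpx_nonneg : forall n x, 0 <= px n x)
  (Hpx_sum : forall n, fold_right Rplus 0 (map (px n) (all_strings n)) = 1) :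
  exists S : R, forall (J L : nat) (delta : R),
    (1 <= L)%nat -> (L < J)%nat -> 0 < delta ->
    Rbar_le (LimSup_seq (fun n => H_Yge px p d J L n / INR n))
            (Finite (2 * (S * sqrt (INR L / INR J) + delta))).
Proof.
  destruct Hreg2 as [B0 HB0]. set (B := Rabs B0). assert (HB : 0 <= B) by apply Rabs_pos.
  exists (12 * alpha * B). intros J L delta HL HJL Hdelta.
  set (r := INR L / INR J).
  assert (Hr : 0 <= r <= 1).
  { assert (1 <= INR L) by (apply (le_INR 1); lia). assert (INR L < INR J) by (apply lt_INR; lia).
    split; [apply Rlt_le, Rdiv_lt_0_compat | apply Rle_div_l]; lra. }
  destruct (ell_eventually_comparable ell alpha Halpha Halpha_pos) as [N1 HN1].
  assert (HC : 0 <= 48 * alpha ^ 2 * B ^ 2)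
    by (pose proof (pow2_ge_0 alpha); pose proof (pow2_ge_0 B); apply Rmult_le_pos; nra).
  destruct (log2_term_negligible _ _ HC Hdelta) as [N2 HN2].
  apply LimSup_seq_le_of_eventually. exists (N1 + N2 + 5)%nat. intros n HnN.
  destruct (HN1 n ltac:(lia)) as [Hell Hratio]. destruct (HB0 n ltac:(lia)) as [Hex HSer].
  pose proof (H_Yge_le_linear p px d (ell n) alpha B J L n (Hp_pos n) (Hp_nonneg n) (Hp_sum n)
    (Hmean n) Hell Hratio (Rlt_le _ _ Halpha_pos) HB Hex (Rle_trans _ _ _ HSer (Rle_abs B0))
    (Hpx_nonneg n) (Hpx_sum n) Hd ltac:(lia) ltac:(lia)) as HH.
  specialize (HN2 n ltac:(lia)). fold r in HH.
  assert (Hn : 0 < INR n) by (apply lt_0_INR; lia).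
  assert (Hsqrt : 12 * alpha * B * r <= 12 * alpha * B * sqrt r)
    by (apply Rmult_le_compat_l; [nra | apply le_sqrt_of_le_1, Hr]).
  apply Rmult_le_compat_r with (r := INR n) in Hsqrt; [|lra].
  assert (0 <= 12 * alpha * B * sqrt r) by (pose proof (sqrt_pos r); apply Rmult_le_pos; nra).
  apply Rle_div_l; [exact Hn|]. nra.
Qed.
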